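(* Consider the most-profitable-augmenting-path algorithm (described in the context) run on an instance of the maximum-weight online bipartite left-perfect matching problem with budget $k=4$, and let $M^\star$ be a maximum-weight left-perfect matching of $G$. Then for each timestep $t\in\{1,\dots,n\}$, $p_t\ge w(u_t,M^\star(u_t))-\ell^t_{M^\star(u_t)}$.
   Context: Problem: $G=(L\cup R,E)$ is a complete bipartite graph with $n:=|L|\le|R|$ and edge weights $w:E\to\mathbb{Q}_{\ge0}$. The algorithm initially knows $R$; at timestep $t=1,\dots,n$ the vertex $u_t\in L$ arrives with all incident edges and their weights. At the end of each timestep the algorithm outputs a left-perfect matching of the revealed graph (every arrived vertex of $L$ matched), obtainable from the previous one (empty initially) by at most $4$ (re)assignments (the number of vertices of nonzero degree in the symmetric difference of the two matchings); matched vertices stay matched. Algorithm: when $u_t$ arrives, among all augmenting paths with respect to the current matching $M$ that contain $u_t$ and have length at most $3$, choose one $P$ maximizing the weight of $M\triangle P$ minus the weight of $M$, and output $M\triangle P$. Notation: $M_t$ is the matching at the beginning of timestep $t$ (output at time $t-1$; $M_1=\emptyset$, $M_{n+1}$ is the final matching); $R^t_{\mathsf{exp}}$ is the set of vertices of $R$ not covered by $M_t$; for a matching $M$, $M(u)$ is the partner of $u$. The marginal profit is $p_t:=\sum_{e\in M_{t+1}}w(e)-\sum_{e\in M_t}w(e)$. For $v\in R$, the loss $\ell^t_v:=w(M_t(v),v)-\max_{v'\in R^t_{\mathsf{exp}}}w(M_t(v),v')$ if $v$ is matched in $M_t$, and $\ell^t_v:=0$ otherwise, with the convention $\max\emptyset:=0$.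 *)

From HB Require Import structures.
From mathcomp Require Import all_boot all_order all_algebra.
Set Implicit Arguments. Unset Strict Implicit. Unset Printing Implicit Defensive.
Import Order.TTheory GRing.Theory Num.Theory.
Local Open Scope ring_scope.

(* Left side L = 'I_n, where vertex i : 'I_n is the (i+1)-th arriving vertex
   u_{i+1}.  The graph is complete
   bipartite; edges are pairs (u, v) : 'I_n * R, weights w u v : rat. *)
Section Matching.
Variables (n : nat) (R : finType) (w : 'I_n -> R -> rat).

Definition edge := ('I_n * R)%type.
Definition vertex := ('I_n + R)%type.

Definition weight (M : {set edge}) : rat := \sum_(e in M) w e.1 e.2.

Definition is_matching (M : {set edge}) : Prop :=
  (forall u v1 v2, (u, v1) \in M -> (u, v2) \in M -> v1 = v2) /\
  (forall u1 u2 v, (u1, v) \in M -> (u2, v) \in M -> u1 = u2).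

Definition left_perfect (M : {set edge}) : Prop :=
  is_matching M /\ forall u : 'I_n, exists v, (u, v) \in M.

Definition covered (M : {set edge}) (x : vertex) : bool :=
  match x with
  | inl u => [exists v, (u, v) \in M]
  | inr v => [exists u, (u, v) \in M]
  end.

Definition edge_of (a b : vertex) : option edge :=
  match a, b with
  | inl u, inr v => Some (u, v)
  | inr v, inl u => Some (u, v)
  | _, _ => None
  end.

Definition path_edges (p : seq vertex) : seq edge :=
  pmap (fun ab => edge_of ab.1 ab.2) (zip p (behead p)).

Definition path_edge_set (p : seq vertex) : {set edge} :=
  [set e | e \in path_edges p].

(* p is an augmenting path w.r.t. M: a simple path (at least one edge) whose
   endpoints are not covered by M and whose edges alternate between edges not
   in M and edges in M (starting, hence also ending, with a non-M edge). *)
Definition endpoints_free (M : {set edge}) (p : seq vertex) : bool :=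
  match p with
  | x :: s => ~~ covered M x && ~~ covered M (last x s)
  | [::] => false
  end.

Definition augmenting (M : {set edge}) (p : seq vertex) : bool :=
  [&& uniq p, 1 < size p,
      size (path_edges p) == (size p).-1,
      endpoints_free M p &
      all (fun ei => (ei.1 \in M) == odd ei.2)
          (zip (path_edges p) (iota 0 (size (path_edges p))))]%N.

Definition symdiff (A B : {set edge}) : {set edge} := (A :\: B) :|: (B :\: A).

Definition gain (M : {set edge}) (p : seq vertex) : rat :=
  weight (symdiff M (path_edge_set p)) - weight M.

(* candidate paths at the timestep where u_{t+1} = t arrives: augmenting paths
   of the revealed graph (left vertices 0..t) containing t, of length <= 3 *)
Definition candidate (M : {set edge}) (t : 'I_n) (p : seq vertex) : bool :=
  [&& augmenting M p, (size p <= 4)%N, (inl t : vertex) \in p &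
      all (fun x : vertex => match x with inl u => (u <= t)%N | inr _ => true end) p].

Definition alg_step (M : {set edge}) (t : 'I_n) (M' : {set edge}) : Prop :=
  exists2 p, candidate M t p &
    (forall q, candidate M t q -> gain M q <= gain M p) /\
    M' = symdiff M (path_edge_set p).

(* Ms k is the matching at the beginning of the timestep in which the vertex
   k : 'I_n (i.e. u_{k+1}) arrives; Ms n is the final matching. *)
Definition alg_run (Ms : nat -> {set edge}) : Prop :=
  Ms 0%N = set0 /\ forall t : 'I_n, alg_step (Ms t) t (Ms t.+1).

Definition profit (Ms : nat -> {set edge}) (t : nat) : rat :=
  weight (Ms t.+1) - weight (Ms t).

(* max over the R-vertices not covered by M of w u v', with max of empty = 0
   (weights are nonnegative, so 0 as neutral element is harmless) *)
Definition max_free (M : {set edge}) (u : 'I_n) : rat :=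
  if [exists v', ~~ covered M (inr v')]
  then \big[Order.max/0]_(v' | ~~ covered M (inr v')) w u v'
  else 0.

Definition loss (M : {set edge}) (v : R) : rat :=
  match [pick u | (u, v) \in M] with
  | Some u => w u v - max_free M u
  | None => 0
  end.

End Matching.

From HB Require Import structures.
From mathcomp Require Import all_boot all_order all_algebra.
From mathcomp Require Import lra.
Set Implicit Arguments. Unset Strict Implicit. Unset Printing Implicit Defensive.
Import Order.TTheory GRing.Theory Num.Theory.
Local Open Scope ring_scope.

(* The bound holds for every right vertex v, not only for M*(u_t).  The
   arriving vertex u_t is uncovered by M_t, so if v is free the single edge
   (u_t, v) is a candidate path of gain w(u_t, v), and if v is matched to u
   then u_t v u v' is a candidate path of gain w(u_t, v) - w(u, v) + w(u, v')
   for every free v'.  The algorithm's profit dominates both gains; taking the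
   maximum over v' gives the claim.  A free v' exists because the path chosen
   by the algorithm has an endpoint in R. *)

Section Paths.
Variables (n : nat) (R : finType) (w : 'I_n -> R -> rat).

Lemma weight_symdiff (M B : {set edge n R}) :
  weight w (symdiff M B) =
  weight w M + \sum_(e in B) (if e \in M then - w e.1 e.2 else w e.1 e.2).
Proof.
rewrite /weight (big_mkcond (fun e => e \in symdiff M B)) /=.
rewrite (big_mkcond (fun e => e \in M)) (big_mkcond (fun e => e \in B)) /=.
rewrite -big_split /=; apply: eq_bigr => e _.
rewrite /symdiff !inE.
by case: (e \in M); case: (e \in B) => /=; rewrite ?addr0 ?add0r ?subrr.
Qed.

Lemma gain_path (M : {set edge n R}) (p : seq (vertex n R)) :
  uniq (path_edges p) ->
  gain w M p = \sum_(e <- path_edges p) (if e \in M then - w e.1 e.2 else w e.1 e.2).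
Proof.
move=> uniq_p; rewrite /gain weight_symdiff addrC addKr big_uniq //.
by apply: eq_bigl => e; rewrite inE.
Qed.

Lemma path_edges_mem_left (p : seq (vertex n R)) e :
  e \in path_edges p -> (inl e.1 : vertex n R) \in p.
Proof.
elim: p => [|a [|b s] IH] //=.
move: IH; rewrite /path_edges /=.
case: a => [a|a]; case: b => [b|b] //= IH.
- by move/IH => h; rewrite in_cons h orbT.
- rewrite in_cons => /orP [/eqP -> | /IH h]; [exact: mem_head | by rewrite in_cons h orbT].
- rewrite in_cons => /orP [/eqP -> | /IH h]; last by rewrite in_cons h orbT.
  by rewrite /= !in_cons eqxx orbT.
Qed.

Lemma candidate_free_right (M : {set edge n R}) t p :
  candidate M t p -> exists v, ~~ covered M (inr v).
Proof.
(* Either an endpoint is in R, or the path is u v u' and its M-edge (u', v)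
   covers the free endpoint u'. *)
case/and4P=> + sz _ _.
case: p sz => [|a [|b [|c [|d [|x s]]]]] //= _.
all: try case: d => d; try case: c => c; case: b => b; case: a => a.
all: rewrite /augmenting /path_edges /= => H.
all: repeat match goal with H : is_true (_ && _) |- _ => case/andP: H => ? ? end; try done.
all: try match goal with h : is_true (~~ [exists u, (u, ?x) \in ?M]) |- _ => exists x; exact h end.
all: match goal with h : is_true (~~ [exists v, (?c, v) \in ?M]), h2 : is_true (((?c, ?b) \in ?M) == true) |- _ =>
  exfalso; move/negP: h; apply; apply/existsP; exists b; exact: (elimT eqP h2) end.
Qed.

Lemma notin_uncovered_left (M : {set edge n R}) u v :
  ~~ covered M (inl u) -> (u, v) \notin M.
Proof. by apply: contra => uv; apply/existsP; exists v. Qed.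

Lemma notin_uncovered_right (M : {set edge n R}) u v :
  ~~ covered M (inr v) -> (u, v) \notin M.
Proof. by apply: contra => uv; apply/existsP; exists u. Qed.

Section Augment.
Variables (M : {set edge n R}) (t : 'I_n).
Hypothesis t_free : ~~ covered M (inl t).

Lemma candidate_edge v :
  ~~ covered M (inr v) -> candidate M t [:: inl t; inr v].
Proof.
move=> v_free; move: (t_free) (v_free); rewrite /candidate /augmenting /path_edges /=.
by rewrite (negbTE (notin_uncovered_left v t_free)) mem_head leqnn => -> ->.
Qed.

Lemma gain_edge v : gain w M [:: inl t; inr v] = w t v.
Proof.
by rewrite gain_path // big_seq1 (negbTE (notin_uncovered_left v t_free)).
Qed.

Variables (u : 'I_n) (v v' : R).
Hypotheses (uv_in : (u, v) \in M) (lt_ut : (u < t)%N) (v'_free : ~~ covered M (inr v')).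

Let t_neq_u : t != u.
Proof. by apply: contraTneq lt_ut => ->; rewrite ltnn. Qed.

Let v_neq_v' : v != v'.
Proof. by apply: contraNneq v'_free => <-; apply/existsP; exists u. Qed.

Lemma candidate_swap : candidate M t [:: inl t; inr v; inl u; inr v'].
Proof.
move: (t_free) (v'_free); rewrite /candidate /augmenting /path_edges /= => -> ->.
rewrite (negbTE (notin_uncovered_left v t_free)) uv_in.
rewrite (negbTE (notin_uncovered_right u v'_free)) mem_head leqnn (ltnW lt_ut).
by rewrite !inE /= !(inj_eq inl_inj) (inj_eq inr_inj) (negbTE t_neq_u) v_neq_v'.
Qed.

Lemma gain_swap :
  gain w M [:: inl t; inr v; inl u; inr v'] = w t v - w u v + w u v'.
Proof.
rewrite gain_path /path_edges /=; last first.
  by rewrite !inE !xpair_eqE (negbTE t_neq_u) (negbTE v_neq_v') !andbF.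
rewrite !big_cons big_nil uv_in (negbTE (notin_uncovered_left v t_free)).
by rewrite (negbTE (notin_uncovered_right u v'_free)) addr0 addrA.
Qed.

End Augment.

Lemma max_free_le (M : {set edge n R}) u c :
  0 <= c -> (forall v, ~~ covered M (inr v) -> w u v <= c) -> max_free w M u <= c.
Proof. by move=> c_ge0 le_c; rewrite /max_free; case: ifP => // _; exact: bigmax_le. Qed.

Section Run.
Variable Ms : nat -> {set edge n R}.
Hypothesis run : alg_run w Ms.

Lemma alg_run_left_lt t :
  (t <= n)%N -> forall e, e \in Ms t -> (e.1 < t)%N.
Proof.
case: run => Ms0 step; elim: t => [|t IH] le_tn e; first by rewrite Ms0 inE.
have [p /and4P [_ _ _ /allP p_le_t] [_ ->]] := step (Ordinal le_tn).
rewrite /symdiff !inE => /orP [/andP [_ /IH lt_et] | /andP [_ /path_edges_mem_left]].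
  exact: ltn_trans (lt_et (ltnW le_tn)) _.
by move/p_le_t.
Qed.

Lemma alg_run_arrival_free (t : 'I_n) : ~~ covered (Ms t) (inl t).
Proof.
apply/existsP => -[v /(alg_run_left_lt (ltnW (ltn_ord t)))].
by rewrite ltnn.
Qed.

Lemma alg_run_free_right (t : 'I_n) : exists v, ~~ covered (Ms t) (inr v).
Proof. by have [p /candidate_free_right] := run.2 t. Qed.

Lemma profit_ge_gain (t : 'I_n) q :
  candidate (Ms t) t q -> gain w (Ms t) q <= profit w Ms t.
Proof. by have [p _ [best step_t]] := run.2 t; rewrite /profit step_t => /best. Qed.

End Run.

End Paths.

Theorem lemma3 (n : nat) (R : finType) (w : 'I_n -> R -> rat)
  (w_ge0 : forall u v, 0 <= w u v)
  (hLR : (n <= #|R|)%N)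
  (Ms : nat -> {set edge n R})
  (run : alg_run w Ms)
  (Mstar : {set edge n R})
  (Mstar_lp : left_perfect Mstar)
  (Mstar_max : forall M : {set edge n R}, left_perfect M -> weight w M <= weight w Mstar) :
  forall (t : 'I_n) (v : R), (t, v) \in Mstar ->
    profit w Ms t >= w t v - loss w (Ms t) v.
Proof.
move=> t v _.
have t_free := alg_run_arrival_free run t.
rewrite /loss; case: pickP => [u uv_in | v_unmatched]; last first.
  have v_free : ~~ covered (Ms t) (inr v).
    by apply/existsP => -[u]; rewrite v_unmatched.
  by rewrite subr0 -(gain_edge w t_free v); exact/profit_ge_gain/candidate_edge.
have lt_ut := alg_run_left_lt run (ltnW (ltn_ord t)) uv_in.
have swap_le v' :
    ~~ covered (Ms t) (inr v') -> w u v' <= profit w Ms t - w t v + w u v.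
  move=> v'_free; have := profit_ge_gain run (candidate_swap t_free uv_in lt_ut v'_free).
  by rewrite gain_swap //; lra.
have [v1 v1_free] := alg_run_free_right run t.
have := max_free_le (le_trans (w_ge0 u v1) (swap_le v1 v1_free)) swap_le.
lra.
Qed.
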